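(* Let $q$ be a prime power and let $C$ be an $[n,k,d]_q$ Griesmer optimal linear code with $q\mid d$ and $\Gamma_q(n,k,d)\ge 2$. Let $\mathbf{c}\in C$ be any codeword of weight $d$ and let $C'$ be any linear subcode of $C$ with $C=\langle \mathbf{c},C'\rangle$ and $\mathbf{c}\notin C'$ (a supplementary subcode of $\mathbf{c}$). Then $$A_{d/q}\big(\Upsilon_{\mathbf{c}}(C)\big)\le \min\Big\{A_d(C'),\ \min\{A_d(C'+\alpha\mathbf{c}) : \alpha\in\mathbb{F}_q^*\}\Big\}.$$
   Context: An $[n,k,d]_q$ linear code is a $k$-dimensional subspace of $\mathbb{F}_q^n$ with minimum nonzero Hamming weight $d$. For any set $S\subseteq\mathbb{F}_q^n$, $A_i(S)$ is the number of vectors of Hamming weight $i$ in $S$; $C'+\mathbf{v}=\{\mathbf{c}'+\mathbf{v}:\mathbf{c}'\in C'\}$. The support of a vector is the set of its nonzero coordinates; $\Upsilon_{\mathbf{c}}(C)$ (the residual code of $C$ with respect to $\mathbf{c}$) is the code obtained from $C$ by deleting all coordinates in the support of $\mathbf{c}$. Let $g_q(k,d)=\sum_{i=0}^{k-1}\lceil d/q^i\rceil$. $C$ is Griesmer optimal if $n<g_q(k,d+1)$. For a Griesmer optimal $[n,k,d]_q$ code, $\Gamma_q(n,k,d)=k$ if $n=g_q(k,d)$; otherwise $\Gamma_q(n,k,d)$ is the smallest non-negative integer $k_1$ such that $n-g_q(k_1,d)\ge g_q(k-k_1,\lceil d/q^{k_1}\rceil+1)$ (with $g_q(0,\cdot)=0$).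 *)

From HB Require Import structures.
From mathcomp Require Import all_boot all_order all_algebra all_field.
Set Implicit Arguments. Unset Strict Implicit. Unset Printing Implicit Defensive.
Import GRing.Theory.
Local Open Scope ring_scope.

Definition wt (F : finFieldType) (n : nat) (x : 'rV[F]_n) : nat :=
  #|[set i : 'I_n | x 0 i != 0]|.

Definition A (F : finFieldType) (n : nat) (i : nat) (S : {set 'rV[F]_n}) : nat :=
  #|[set x in S | wt x == i]|.

Definition codeset (F : finFieldType) (n : nat) (C : {vspace 'rV[F]_n}) : {set 'rV[F]_n} :=
  [set x : 'rV[F]_n | x \in C].

Definition coset (F : finFieldType) (n : nat) (C : {vspace 'rV[F]_n}) (v : 'rV[F]_n)
  : {set 'rV[F]_n} := [set x + v | x in codeset C].

Definition min_dist (F : finFieldType) (n : nat) (C : {vspace 'rV[F]_n}) (d : nat) : Prop :=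
  (exists2 x : 'rV[F]_n, (x \in C) && (x != 0) & wt x = d) /\
  (forall x : 'rV[F]_n, x \in C -> x != 0 -> (d <= wt x)%N).

Definition offsupp (F : finFieldType) (n : nat) (c : 'rV[F]_n) : {set 'I_n} :=
  [set i : 'I_n | c 0 i == 0].

(* Delete the coordinates of the support of c from x (remaining coordinates
   kept in increasing order); result has length n - wt c. *)
Definition delete_supp (F : finFieldType) (n : nat) (c x : 'rV[F]_n)
  : 'rV[F]_#|offsupp c| :=
  \row_(j < #|offsupp c|) x 0 (enum_val j).

Definition residual (F : finFieldType) (n : nat) (c : 'rV[F]_n) (C : {vspace 'rV[F]_n})
  : {set 'rV[F]_#|offsupp c|} := [set delete_supp c x | x in codeset C].

Definition ceildiv (a b : nat) : nat := ((a + b.-1) %/ b)%N.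

Definition griesmer (q k d : nat) : nat := (\sum_(i < k) ceildiv d (q ^ i))%N.

(* Gamma_q(n,k,d). Smallest k1 (searched in 0..k, and k1 = k always qualifies
   when n >= g_q(k,d)). *)
Definition Gamma (q n k d : nat) : nat :=
  if n == griesmer q k d then k
  else find (fun k1 => griesmer q (k - k1) (ceildiv d (q ^ k1) + 1)
                        <= n - griesmer q k1 d)%N (iota 0 k.+1).

From HB Require Import structures.
From mathcomp Require Import all_boot all_order all_algebra all_field.
From mathcomp Require Import zify.
Import GRing.Theory.
Set Implicit Arguments. Unset Strict Implicit.
Local Open Scope ring_scope.

(* Put m = d / q and let x have weight m off supp c.  If N_b counts the
   coordinates of supp c on which x + b c vanishes, then
   wt (x + b c) = m + d - N_b, and since each coordinate of supp c is killed
   by exactly one b, sum_b N_b = d = q m.  If every nonzero x + b c has weight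
   at least d, then N_b <= m for all b, so N_b = m and every x + b c has
   weight exactly d.  Every word of Upsilon_c(C) is the restriction of a word
   of C' + alpha c, so the words of weight m in Upsilon_c(C) are restrictions
   of words of weight d in C' + alpha c. *)

Lemma wt_eq0 (F : finFieldType) n (x : 'rV[F]_n) : (wt x == 0%N) = (x == 0).
Proof.
rewrite cards_eq0; apply/eqP/eqP => [x0 | ->].
  apply/rowP => i; rewrite mxE; apply/eqP/negbFE.
  by move/setP: x0 => /(_ i); rewrite !inE.
by apply/setP => i; rewrite !inE mxE eqxx.
Qed.

Section Weights.

Variables (F : finFieldType) (n : nat).
Implicit Types (x y c : 'rV[F]_n).

Lemma wt_delete_supp c x :
  wt (delete_supp c x) = #|[set i : 'I_n | (c 0 i == 0) && (x 0 i != 0)]|.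
Proof.
have -> : [set i : 'I_n | (c 0 i == 0) && (x 0 i != 0)] =
    enum_val @: [set j : 'I_#|offsupp c| | x 0 (enum_val j) != 0].
  apply/setP => i; rewrite inE; apply/andP/imsetP => [[ci xi] | [j + ->]].
    have Ti : i \in offsupp c by rewrite inE.
    by exists (enum_rank_in Ti i); rewrite ?inE enum_rankK_in.
  by rewrite inE; have := enum_valP j; rewrite inE.
rewrite card_imset; last exact: enum_val_inj.
by apply/eq_card => j; rewrite !inE mxE.
Qed.

Lemma delete_supp_addZ c x (b : F) :
  delete_supp c (x + b *: c) = delete_supp c x.
Proof.
apply/rowP => j; rewrite !mxE.
by have := enum_valP j; rewrite inE => /eqP ->; rewrite mulr0 addr0.
Qed.

Definition supp_zeros c y : nat :=
  #|[set i : 'I_n | (c 0 i != 0) && (y 0 i == 0)]|.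

Lemma wt_split_supp c y :
  (wt y + supp_zeros c y = wt (delete_supp c y) + wt c)%N.
Proof.
pose on_supp (P : pred 'I_n) := #|[set i | (c 0 i != 0) && P i]|.
pose y_nz : pred 'I_n := fun i => y 0 i != 0.
have wt_yE : wt y = (wt (delete_supp c y) + on_supp y_nz)%N.
  rewrite wt_delete_supp /wt -(cardsID [set i | c 0 i == 0]).
  by congr (_ + _)%N; apply/eq_card => i; rewrite !inE // andbC.
have wt_cE : wt c = (on_supp y_nz + supp_zeros c y)%N.
  rewrite /wt -(cardsID [set i | y 0 i != 0]).
  by congr (_ + _)%N; apply/eq_card => i; rewrite !inE ?negbK andbC.
by rewrite wt_yE wt_cE addnA.
Qed.

Lemma sum_supp_zeros_line c x :
  (\sum_(b : F) supp_zeros c (x + b *: c))%N = wt c.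
Proof.
rewrite /supp_zeros /wt.
under eq_bigr => b _ do rewrite -sum1_card big_mkcond /=.
rewrite exchange_big /= -sum1_card [RHS]big_mkcond /=.
apply: eq_bigr => i _; rewrite inE.
have [c0 | ci] := eqVneq (c 0 i) 0.
  by rewrite big1 // => b _; rewrite inE c0 eqxx.
rewrite (bigD1 (- x 0 i / c 0 i)) //= big1 ?inE ?mxE ?ci /=.
  by rewrite divfK // subrr eqxx.
move=> b nb; rewrite inE mxE ci /= addr_eq0 ifF //.
by apply/negP => /eqP b_eq; move: nb; rewrite b_eq mxE opprK mulfK // eqxx.
Qed.

Lemma wt_eq_of_wt_delete_supp (m : nat) c x :
  (0 < m)%N -> wt c = (#|F| * m)%N -> wt (delete_supp c x) = m ->
  (forall b : F, x + b *: c != 0 -> (wt c <= wt (x + b *: c))%N) ->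
  wt x = wt c.
Proof.
move=> m_gt0 wt_c wt_dx wt_min.
have zeros_le b : (supp_zeros c (x + b *: c) <= m)%N.
  have nz : x + b *: c != 0.
    have : delete_supp c (x + b *: c) != 0.
      by rewrite delete_supp_addZ -wt_eq0 wt_dx -lt0n.
    by apply: contraNneq => ->; apply/eqP/rowP => j; rewrite !mxE.
  have := wt_split_supp c (x + b *: c); rewrite delete_supp_addZ wt_dx.
  have := wt_min b nz; lia.
have /leqif_sum [_] := fun b (_ : true) => leqif_eq (zeros_le b).
rewrite sum_supp_zeros_line sum_nat_const wt_c eqxx.
move=> /esym/forall_inP/(_ 0 isT)/eqP; rewrite scale0r addr0 => zeros_x.
by have := wt_split_supp c x; rewrite zeros_x wt_dx; lia.
Qed.

End Weights.

Lemma coset0 (F : finFieldType) n (C : {vspace 'rV[F]_n}) :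
  coset C 0 = codeset C.
Proof.
apply/setP => x; apply/imsetP/idP => [[y yC ->] | xC]; first by rewrite addr0.
by exists x; rewrite ?addr0.
Qed.

Lemma min_dist_gt0 (F : finFieldType) n (C : {vspace 'rV[F]_n}) d :
  min_dist C d -> (0 < d)%N.
Proof. by case=> [[x /andP[_ x0] <-] _]; rewrite lt0n wt_eq0. Qed.

Section SupplementaryCoset.

Variables (F : finFieldType) (n d : nat).
Variables (C C' : {vspace 'rV[F]_n}) (c : 'rV[F]_n).

Lemma residual_sub_delete_coset (alpha : F) :
  (C <= <[c]> + C')%VS ->
  residual c C \subset delete_supp c @: coset C' (alpha *: c).
Proof.
move=> sC; apply/subsetP => _ /imsetP[z + ->]; rewrite inE => /(subvP sC).
case/memv_addP => _ /vlineP[b ->] [x xC' ->].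
apply/imsetP; exists (x + alpha *: c).
  by apply/imsetP; exists x; rewrite ?inE.
by rewrite addrC !delete_supp_addZ.
Qed.

Hypotheses (C_min : min_dist C d) (q_dvd_d : (#|F| %| d)%N).
Hypotheses (cC : c \in C) (wt_c : wt c = d) (sC' : (C' <= C)%VS).

Lemma wt_coset_of_wt_delete_supp (alpha : F) z :
  z \in coset C' (alpha *: c) -> wt (delete_supp c z) = (d %/ #|F|)%N ->
  wt z = d.
Proof.
case/imsetP=> x; rewrite inE => xC' -> wt_dz; rewrite -wt_c.
apply: (wt_eq_of_wt_delete_supp (m := (d %/ #|F|)%N)) => //.
- rewrite divn_gt0 ?(dvdn_leq (min_dist_gt0 C_min)) //.
  by apply/card_gt0P; exists 0.
- by rewrite wt_c mulnC divnK.
- move=> b nz; rewrite wt_c; apply: C_min.2 nz.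
  by rewrite -addrA -scalerDl memvD ?memvZ // (subvP sC').
Qed.

Lemma A_residual_le_coset (alpha : F) :
  (C <= <[c]> + C')%VS ->
  (A (d %/ #|F|) (residual c C) <= A d (coset C' (alpha *: c)))%N.
Proof.
move=> sC; rewrite /A.
apply: leq_trans (leq_imset_card (delete_supp c) _).
apply/subset_leq_card/subsetP => y; rewrite inE => /andP[yR /eqP wt_y].
have /imsetP[z zS y_eq] := subsetP (residual_sub_delete_coset alpha sC) y yR.
apply/imsetP; exists z => //; rewrite inE zS /=.
by rewrite (wt_coset_of_wt_delete_supp zS) // -y_eq.
Qed.

End SupplementaryCoset.

Theorem proposition1 (F : finFieldType) (n k d : nat)
  (C C' : {vspace 'rV[F]_n}) (c : 'rV[F]_n) :
  \dim C = k ->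
  min_dist C d ->
  (n < griesmer #|F| k d.+1)%N ->
  (#|F| %| d)%N ->
  (2 <= Gamma #|F| n k d)%N ->
  c \in C -> wt c = d ->
  (C' <= C)%VS -> c \notin C' -> C = (<[c]> + C')%VS ->
  (A (d %/ #|F|) (residual c C) <= A d (codeset C'))%N /\
  (forall alpha : F, alpha != 0 ->
     (A (d %/ #|F|) (residual c C) <= A d (coset C' (alpha *: c)))%N).
Proof.
move=> _ C_min _ q_dvd_d _ cC wt_c sC' _ defC.
have sC : (C <= <[c]> + C')%VS by rewrite defC.
split=> [|alpha _]; last exact: A_residual_le_coset.
rewrite -(coset0 C') -(scale0r c).
exact: A_residual_le_coset.
Qed.
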